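(* Let $S$ be an infinite set, $\mathcal{F}\subseteq 2^S$ nontrivial, and $C,A\subseteq S$ with $A$ infinite and $A\cap C=\emptyset$. Then the following are equivalent: (i) $A\in\mathit{ccore}_1(C,\mathcal{F})$; (ii) $A\notin\mathit{cclass}_1(C,\mathcal{F})$ and $A\in\mathit{ccohesive}(S\setminus C,\mathcal{F})$.
   Context: $\mathcal{F}$ is nontrivial if $\emptyset,S\in\mathcal{F}$ and for all $Q\in\mathcal{F}$ and finite $E\subseteq S$ both $Q\cup E\in\mathcal{F}$ and $Q\setminus E\in\mathcal{F}$. For $C\subseteq S$ and an infinite $A\subseteq S\setminus C$: $A\in\mathit{cclass}_1(C,\mathcal{F})$ iff there is $Q\in\mathcal{F}$ with $S\setminus Q\in\mathcal{F}$, $C\subseteq Q$ and $A\subseteq S\setminus Q$; $A\in\mathit{ccore}_1(C,\mathcal{F})$ iff every infinite $A'\subseteq A$ satisfies $A'\notin\mathit{cclass}_1(C,\mathcal{F})$. For $D\subseteq S$, $A\in\mathit{ccohesive}(D,\mathcal{F})$ iff $A$ is infinite and for every $Q\subseteq D$ with $Q\in\mathcal{F}$ and $S\setminus Q\in\mathcal{F}$, either $A\cap Q$ or $A\setminus Q$ is finite. *)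

From Stdlib Require Import List.

Definition subset (S : Type) := S -> Prop.

Definition incl {S : Type} (A B : subset S) : Prop := forall x, A x -> B x.
Definition seteq {S : Type} (A B : subset S) : Prop := forall x, A x <-> B x.
Definition setU {S : Type} (A B : subset S) : subset S := fun x => A x \/ B x.
Definition setD {S : Type} (A B : subset S) : subset S := fun x => A x /\ ~ B x.
Definition setI {S : Type} (A B : subset S) : subset S := fun x => A x /\ B x.
Definition setT {S : Type} : subset S := fun _ => True.
Definition set0 {S : Type} : subset S := fun _ => False.
Definition setC {S : Type} (A : subset S) : subset S := setD setT A.

Definition finite {S : Type} (A : subset S) : Prop :=
  exists l : list S, forall x, A x -> In x l.
Definition infinite {S : Type} (A : subset S) : Prop := ~ finite A.

(* A family of subsets of S; since subsets are predicates we require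
   the family to be closed under extensional equality of sets. *)
Definition family (S : Type) := subset S -> Prop.
Definition ext_family {S : Type} (F : family S) : Prop :=
  forall Q Q', seteq Q Q' -> F Q -> F Q'.

Definition nontrivial {S : Type} (F : family S) : Prop :=
  F set0 /\ F setT /\
  forall Q E, F Q -> finite E -> F (setU Q E) /\ F (setD Q E).

Definition cclass1 {S : Type} (C : subset S) (F : family S) (A : subset S) : Prop :=
  infinite A /\ incl A (setC C) /\
  exists Q, F Q /\ F (setC Q) /\ incl C Q /\ incl A (setC Q).

Definition ccore1 {S : Type} (C : subset S) (F : family S) (A : subset S) : Prop :=
  infinite A /\ incl A (setC C) /\
  forall A', incl A' A -> infinite A' -> ~ cclass1 C F A'.

Definition ccohesive {S : Type} (D : subset S) (F : family S) (A : subset S) : Prop :=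
  infinite A /\
  forall Q, incl Q D -> F Q -> F (setC Q) ->
    finite (setI A Q) \/ finite (setD A Q).

(* If A lies in ccore_1, then every separator Q ⊆ S \ C of F cuts A in a
   finite set, for otherwise A ∩ Q would lie in cclass_1 (separated from C
   by S \ Q); in particular A is cohesive, and A itself is not in cclass_1.
   Conversely, if an infinite A' ⊆ A were separated from C by Q, then
   cohesiveness applied to S \ Q ⊆ S \ C makes A ∩ Q finite, and removing
   this finite set from Q (which keeps Q and its complement in F) separates
   all of A from C. *)

From Stdlib Require Import Classical.

Lemma finite_incl {S : Type} (A B : subset S) :
  incl A B -> finite B -> finite A.
Proof.
  intros HAB [l Hl]. exists l. intros x Hx. apply Hl, HAB, Hx.
Qed.

Lemma setCK {S : Type} (Q : subset S) : seteq Q (setC (setC Q)).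
Proof.
  intros x. unfold setC, setD, setT. split; [tauto|].
  intros [_ H]. apply NNPP. tauto.
Qed.

Lemma setC_setD {S : Type} (Q E : subset S) :
  seteq (setU (setC Q) E) (setC (setD Q E)).
Proof.
  intros x. unfold setC, setU, setD, setT. split; [tauto|].
  intros [_ H]. destruct (classic (Q x)); [|tauto].
  right. apply NNPP. tauto.
Qed.

Section Separators.

Variables (S : Type) (F : family S) (C : subset S).
Hypothesis F_ext : ext_family F.

Definition separator (Q : subset S) : Prop := F Q /\ F (setC Q).

Lemma separatorC (Q : subset S) : separator Q -> separator (setC Q).
Proof.
  intros [HQ HCQ]. split; [exact HCQ|]. exact (F_ext _ _ (setCK Q) HQ).
Qed.

Lemma cclass1_setI (A Q : subset S) :
  incl A (setC C) -> incl Q (setC C) -> separator Q ->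
  infinite (setI A Q) -> cclass1 C F (setI A Q).
Proof.
  intros HAC HQC HQ Hinf.
  split; [exact Hinf|]. split.
  - intros x [Hx _]. exact (HAC x Hx).
  - exists (setC Q). destruct (separatorC Q HQ) as [HCQ HCCQ].
    split; [exact HCQ|]. split; [exact HCCQ|]. split.
    + intros x Hc. split; [exact I|]. intros Hq. exact (proj2 (HQC x Hq) Hc).
    + intros x [_ Hq]. split; [exact I|]. intros [_ Hn]. exact (Hn Hq).
Qed.

Hypothesis F_nontrivial : nontrivial F.

(* Removing the finite trace E := A ∩ Q keeps a separator and frees A. *)
Lemma cclass1_of_finite_trace (A Q : subset S) :
  infinite A -> (forall x, ~ (A x /\ C x)) ->
  separator Q -> incl C Q -> finite (setI A Q) -> cclass1 C F A.
Proof.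
  intros HA Hdis [HQ HCQ] HCsub Hfin.
  destruct F_nontrivial as [_ [_ Hclosed]].
  set (E := setI A Q) in *.
  destruct (Hclosed Q E HQ Hfin) as [_ HQE].
  destruct (Hclosed (setC Q) E HCQ Hfin) as [HCQE _].
  split; [exact HA|]. split.
  - intros x Hx. split; [exact I|]. intros Hc. exact (Hdis x (conj Hx Hc)).
  - exists (setD Q E). split; [exact HQE|].
    split; [exact (F_ext _ _ (setC_setD Q E) HCQE)|]. split.
    + intros x Hc. split; [exact (HCsub x Hc)|].
      intros [Ha _]. exact (Hdis x (conj Ha Hc)).
    + intros x Ha. split; [exact I|]. intros [Hq Hn]. exact (Hn (conj Ha Hq)).
Qed.

End Separators.

Theorem lemma4p3 (S : Type) (F : family S) (C A : subset S) :
  infinite (@setT S) ->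
  ext_family F ->
  nontrivial F ->
  infinite A ->
  (forall x, ~ (A x /\ C x)) ->
  (ccore1 C F A <->
   (~ cclass1 C F A /\ ccohesive (setC C) F A)).
Proof.
  intros _ Hext Hnt HA Hdis.
  assert (HAC : incl A (setC C)).
  { intros x Hx. split; [exact I|]. intros Hc. exact (Hdis x (conj Hx Hc)). }
  split.
  - intros [_ [_ Hcore]]. split.
    + apply Hcore; [intros x Hx; exact Hx | exact HA].
    + split; [exact HA|]. intros Q HQC HQ HCQ. left.
      apply NNPP. intros Hinf.
      apply (Hcore (setI A Q)); [intros x [Hx _]; exact Hx | exact Hinf |].
      exact (cclass1_setI S F C Hext A Q HAC HQC (conj HQ HCQ) Hinf).
  - intros [Hncl [_ Hcoh]]. split; [exact HA|]. split; [exact HAC|].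
    intros A' HA'A HA'inf [_ [_ [Q [HQ [HCQ [HCsub HA'Q]]]]]].
    assert (HCQC : incl (setC Q) (setC C)).
    { intros x [_ Hq]. split; [exact I|]. intros Hc. exact (Hq (HCsub x Hc)). }
    destruct (separatorC S F Hext Q (conj HQ HCQ)) as [_ HCCQ].
    destruct (Hcoh (setC Q) HCQC HCQ HCCQ) as [Hfin | Hfin].
    + apply HA'inf. apply (finite_incl A' (setI A (setC Q))); [|exact Hfin].
      intros x Hx. exact (conj (HA'A x Hx) (HA'Q x Hx)).
    + apply Hncl.
      apply (cclass1_of_finite_trace S F C Hext Hnt A Q HA Hdis (conj HQ HCQ) HCsub).
      apply (finite_incl (setI A Q) (setD A (setC Q))); [|exact Hfin].
      intros x [Ha Hq]. split; [exact Ha|]. intros [_ Hn]. exact (Hn Hq).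
Qed.
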